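(* For $k\ge4$ let $\iota_k=\lfloor k^{1/3}\rfloor$ and $$A(k)=\sum_{j=4}^{k-\iota_k-1}j\,s_j\,\tilde\tau_k^{\,j-1}.$$ Then $A(k)=\mathcal{O}(k^{-3})$ as $k\to\infty$.
   Context: Let $s_j$ be the number of simple permutations of size $j$. A permutation is simple if its only intervals (factors whose value set is a set of consecutive integers) are the singletons and the whole permutation, with the convention that the permutations of sizes $1$ and $2$ are not simple. For $k\ge4$, let $$\Lambda_k(x)=\frac{x^2}{1-x}+\sum_{j=4}^k s_j\left(\frac{x}{1-x}\right)^j\qquad(0\le x<1).$$ Let $\tau_k$ be the unique solution in $(0,1)$ of $\Lambda_k'(x)=1$, and set $$\tilde\tau_k=\frac{\tau_k}{1-\tau_k}.$$ *)

From mathcomp Require Import all_boot all_fingroup.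
From Stdlib Require Import Reals.

Set Implicit Arguments.
Unset Strict Implicit.
Unset Printing Implicit Defensive.

(* Permutations of size n are elements of 'S_n, acting on positions/values
   {0,...,n-1}.  (Positions p >= n never occur below since i + l <= n.)
   The factor of [sg] starting at position [i] of length [l]
   is the list of values sg(i), ..., sg(i+l-1). *)
Definition factor_vals (n : nat) (sg : 'S_n) (i l : nat) : seq nat :=
  [seq (if insub p is Some q then nat_of_ord (sg q) else 0) | p <- iota i l].

(* A list of values is an interval if its value set is a set of consecutive
   integers {a, a+1, ..., a+l-1}, l being its length (values are distinct
   for a permutation, and all < n, so a < n). *)
Definition is_interval_vals (n : nat) (s : seq nat) : bool :=
  has (fun a => perm_eq s (iota a (size s))) (iota 0 n).

(* sg is simple: its size is at least 3 (sizes 1 and 2 are not simple by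
   convention) and its only intervals are singletons and the whole
   permutation, i.e. no factor of length l with 2 <= l < n is an interval. *)
Definition simpleb (n : nat) (sg : 'S_n) : bool :=
  (3 <= n) &&
  [forall i : 'I_n.+1, forall l : 'I_n,
     ((2 <= l) && (i + l <= n)) ==> ~~ is_interval_vals n (factor_vals sg i l)].

Definition s_num (j : nat) : nat := #|[set sg : 'S_j | simpleb sg]|.

Open Scope R_scope.

Definition Lambda (k : nat) (x : R) : R :=
  x ^ 2 / (1 - x) +
  List.fold_right Rplus 0
    (List.map (fun j => INR (s_num j) * (x / (1 - x)) ^ j)
              (List.seq 4 (k - 3))).

Definition tilde (t : R) : R := t / (1 - t).

Definition iota_k (k : nat) : nat :=
  Z.to_nat (Int_part (Rpower (INR k) (1 / 3))).

(* A(k) = sum_{j=4}^{k - iota_k - 1} j s_j tilde(tau_k)^(j-1)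
   (empty sum if k - iota_k - 1 < 4); List.seq 4 m = [4; ...; m+3]. *)
Definition A_k (tau : nat -> R) (k : nat) : R :=
  List.fold_right Rplus 0
    (List.map (fun j => INR j * INR (s_num j) * tilde (tau k) ^ (j - 1))
              (List.seq 4 (k - iota_k k - 4))).

(* Inserting a new first entry into a simple permutation of size [n] keeps it
   simple for all but four values of that entry, so [s_(n+1) >= (n - 3) s_n] and
   [s_k >= (k - 4)!].  With [T = tilde tau_k], the equation [Lambda_k'(tau_k) = 1]
   reads [sum_(j=4)^k j s_j T^(j-1) = 1 - 4 tau_k + 2 tau_k^2 <= 1]; hence
   [k (k - 4)! T^(k-1) <= 1], and Stirling-type estimates give [T k / e <= 3].
   Bounding [s_j] by [j!], the term [j = 4] of [A(k)] is [O(k^-3)] and every other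
   term is [O(k^-4)]: for [j <= k / 12] because [j^(j+2) 3^(j-1) = O(k^(j-5))],
   and for larger [j <= k - iota_k - 1] because [(j / k)^(j-1) <= exp (- k^(1/3) / 13)]
   decays faster than any power of [k]. *)

From Stdlib Require Import Reals Lra ZArith.
From mathcomp Require Import all_boot all_fingroup zify.

Set Implicit Arguments.
Unset Strict Implicit.
Unset Printing Implicit Defensive.

(** * Growth of the number of simple permutations *)

Open Scope nat_scope.

Definition pval n (sg : 'S_n) (p : nat) : nat :=
  if insub p is Some q then nat_of_ord (sg q) else 0.

Lemma factor_valsE n (sg : 'S_n) i l :
  factor_vals sg i l = map (pval sg) (iota i l).
Proof. by []. Qed.

Lemma pvalE n (sg : 'S_n) (q : 'I_n) : pval sg q = sg q.
Proof. by rewrite /pval valK. Qed.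

Lemma pval_lt n (sg : 'S_n) p : p < n -> pval sg p < n.
Proof. by move=> hp; rewrite -[p]/(val (Ordinal hp)) pvalE. Qed.

Lemma pval_inj n (sg : 'S_n) p q : p < n -> q < n -> pval sg p = pval sg q -> p = q.
Proof.
move=> hp hq; rewrite -[p]/(val (Ordinal hp)) -[q]/(val (Ordinal hq)) !pvalE.
by move/val_inj/perm_inj => ->.
Qed.

Lemma pval_surj n (sg : 'S_n) v : v < n -> exists2 p, p < n & pval sg p = v.
Proof.
move=> hv; exists (val ((sg^-1)%g (Ordinal hv))); first exact: ltn_ord.
by rewrite pvalE permKV.
Qed.

Lemma inj_in_range_leq (f : nat -> nat) i l a l' :
  {in [pred p | i <= p < i + l] &, injective f} ->
  (forall p, i <= p < i + l -> a <= f p < a + l') -> l <= l'.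
Proof.
move=> finj fr.
have f_uniq : uniq (map f (iota i l)).
  by rewrite map_inj_in_uniq ?iota_uniq // => p q; rewrite !mem_iota; exact: finj.
have f_sub : {subset map f (iota i l) <= iota a l'}.
  by move=> v /mapP [p]; rewrite mem_iota => /fr hp ->; rewrite mem_iota.
by have := uniq_leq_size f_uniq f_sub; rewrite size_map !size_iota.
Qed.

Definition interval_at n (sg : 'S_n) i l :=
  exists a, forall p, i <= p < i + l -> a <= pval sg p < a + l.

Lemma interval_valsP n (sg : 'S_n) i l : i + l <= n -> 0 < l ->
  reflect (interval_at sg i l) (is_interval_vals n (factor_vals sg i l)).
Proof.
move=> hil hl; rewrite factor_valsE /is_interval_vals size_map size_iota.
apply: (iffP hasP).
  move=> [a _ /perm_mem hp]; exists a => p hpr.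
  have : pval sg p \in iota a l by rewrite -hp; apply: map_f; rewrite mem_iota.
  by rewrite mem_iota.
move=> [a ha]; exists a.
  have := ha i; have := pval_lt sg (_ : i < n); rewrite mem_iota; lia.
have f_uniq : uniq (map (pval sg) (iota i l)).
  rewrite map_inj_in_uniq ?iota_uniq // => p q; rewrite !mem_iota => hp hq.
  apply: pval_inj; lia.
have f_sub : {subset map (pval sg) (iota i l) <= iota a l}.
  by move=> v /mapP [p]; rewrite mem_iota => /ha hp ->; rewrite mem_iota.
apply: uniq_perm => //; first exact: iota_uniq.
by have [] := uniq_min_size f_uniq f_sub; rewrite ?size_map ?size_iota.
Qed.

Lemma simplebP n (sg : 'S_n) : simpleb sg <->
  (3 <= n /\ forall i l, 2 <= l -> l < n -> i + l <= n -> ~ interval_at sg i l).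
Proof.
rewrite /simpleb; split.
  move/andP=> [n_ge3 /forallP H]; split=> // i l hl hln hil hint.
  have hi : i < n.+1 by lia.
  move: (H (Ordinal hi)) => /forallP /(_ (Ordinal hln)) /implyP.
  rewrite /= hl hil => /(_ isT) /negP; apply; apply/interval_valsP => //; lia.
move=> [n_ge3 H]; rewrite n_ge3 /=; apply/forallP => i; apply/forallP => l.
apply/implyP => /andP [hl hil]; apply/negP => /interval_valsP.
by move=> /(_ hil) hint; apply: (H i l hl (ltn_ord l) hil); apply: hint; lia.
Qed.

Lemma bumpE y v : bump y v = if y <= v then v.+1 else v.
Proof. by rewrite /bump; case: leqP => //= _; rewrite add1n. Qed.

Lemma pval_lift_perm n (s : 'S_n) (y : 'I_n.+1) p : p < n.+1 ->
  pval (lift_perm ord0 y s) p = if p == 0 then val y else bump y (pval s p.-1).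
Proof.
case: p => [|q] hq; first by rewrite -[0]/(val (@ord0 n)) pvalE lift_perm_id.
have hq' : q < n by [].
rewrite (_ : q.+1 = val (lift ord0 (Ordinal hq'))) // pvalE lift_perm_lift /=.
by rewrite -[q]/(val (Ordinal hq')) pvalE.
Qed.

Section LiftSimple.

Variables (n : nat) (s : 'S_n) (y : 'I_n.+1).
Hypothesis s_simple : simpleb s.

Let g := lift_perm ord0 y s.

Lemma interval_at_lift_head l : 2 <= l -> l < n.+1 -> interval_at g 0 l ->
  y = pval s 0 :> nat \/ y = (pval s 0).+1 :> nat.
Proof.
move=> hl hln [a ha]; have [_ Hs] := (simplebP s).1 s_simple.
have hy : a <= y < a + l by have := ha 0; rewrite pval_lift_perm //; apply; lia.
have hs : forall p, 0 <= p < 0 + l.-1 -> a <= pval s p < a + l.-1.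
  move=> p hp; have := ha p.+1; rewrite pval_lift_perm /= ?bumpE; last lia.
  by case: (leqP y (pval s p)) => hh h; have := h ltac:(lia); lia.
have l2 : l = 2.
  by apply/eqP; rewrite eqn_leq hl andbT leqNgt; apply/negP => hl3;
     apply: (Hs 0 l.-1) => //; [lia | lia | lia | exists a].
by subst l; have := hs 0 isT; lia.
Qed.

Lemma interval_at_lift_tail i l : 2 <= l -> l < n.+1 -> i.+1 + l <= n.+1 ->
  interval_at g i.+1 l -> y = 0 :> nat \/ y = n :> nat.
Proof.
move=> hl hln hil [a ha]; have [n_ge3 Hs] := (simplebP s).1 s_simple.
have hs : forall p, i <= p < i + l ->
    (y <= pval s p -> a <= (pval s p).+1 < a + l) /\
    (pval s p < y -> a <= pval s p < a + l).
  move=> p hp; have := ha p.+1; rewrite pval_lift_perm /= ?bumpE; last lia.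
  by case: (leqP y (pval s p)) => hh h; have := h ltac:(lia); split=> h'; lia.
case: (ltnP l n) => hln'.
  exfalso; case: (ltnP y a) => hya.
    apply: (Hs i l hl hln' (_ : i + l <= n)); first lia; exists a.-1 => p hp.
    by have := hs p hp; lia.
  case: (leqP (a + l) y) => hya2.
    apply: (Hs i l hl hln' (_ : i + l <= n)); first lia; exists a => p hp.
    by have := hs p hp; lia.
  have : l <= l.-1; last lia.
  apply: (@inj_in_range_leq (pval s) i l a).
    by move=> p q; rewrite !inE => hp hq; apply: pval_inj; lia.
  by move=> p hp; have := hs p hp; lia.
have [l_n i0] : l = n /\ i = 0 by lia.
have [p0 hp0 fp0] : exists2 p, p < n & pval s p = 0 by apply: pval_surj; lia.
have [p1 hp1 fp1] : exists2 p, p < n & pval s p = n.-1 by apply: pval_surj; lia.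
have := hs p0 ltac:(lia); have := hs p1 ltac:(lia); rewrite fp0 fp1.
by have := ltn_ord y; lia.
Qed.

Lemma simpleb_lift_perm :
  nat_of_ord y \notin [:: pval s 0; (pval s 0).+1; 0; n] -> simpleb g.
Proof.
rewrite !inE => hy; have [n_ge3 _] := (simplebP s).1 s_simple.
apply/simplebP; split=> [|[|i] l hl hln hil hint]; first lia.
- by have := interval_at_lift_head hl hln hint; move: hy; do 4!case: eqP; lia.
- by have := interval_at_lift_tail hl hln hil hint; move: hy; do 4!case: eqP; lia.
Qed.

End LiftSimple.

Lemma card_ord_notin m (bs : seq nat) :
  m - size bs <= #|[set y : 'I_m | val y \notin bs]|.
Proof.
have card_in : #|[set y : 'I_m | val y \in bs]| <= size bs.
  rewrite cardsE cardE -(size_map val); apply: uniq_leq_size.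
    by rewrite map_inj_uniq ?enum_uniq //; apply: val_inj.
  by move=> v /mapP [y]; rewrite mem_enum => + ->.
have := cardsC [set y : 'I_m | val y \in bs]; rewrite card_ord.
have -> : ~: [set y : 'I_m | val y \in bs] = [set y : 'I_m | val y \notin bs].
  by apply/setP => y; rewrite !inE.
lia.
Qed.

Lemma s_num_rec n : (n - 3) * s_num n <= s_num n.+1.
Proof.
pose bad (sg : 'S_n) := [:: pval sg 0; (pval sg 0).+1; 0; n].
pose D := [set p : 'S_n * 'I_n.+1 | simpleb p.1 && (val p.2 \notin bad p.1)].
pose lift (p : 'S_n * 'I_n.+1) := lift_perm ord0 p.2 p.1.
have lift_inj : injective lift.
  move=> [s1 y1] [s2 y2]; rewrite /lift /= => h.
  have hy : y1 = y2 by have := lift_perm_id ord0 y1 s1; rewrite h lift_perm_id.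
  subst y2; congr (_, _); apply/permP => k.
  by have := lift_perm_lift ord0 y1 s1 k; rewrite h lift_perm_lift => /lift_inj.
have card_D : #|D| <= s_num n.+1.
  rewrite -(card_imset D lift_inj) /s_num; apply: subset_leq_card.
  apply/subsetP => _ /imsetP [[sg y] hp ->]; rewrite inE.
  by move: hp; rewrite inE /= => /andP [hs hb]; exact: simpleb_lift_perm.
apply: leq_trans card_D.
rewrite -sum1dep_card.
rewrite -(pair_big_dep (fun sg : 'S_n => simpleb sg)
            (fun sg (y : 'I_n.+1) => val y \notin bad sg) (fun _ _ => 1)) /=.
rewrite mulnC /s_num -sum_nat_cond_const.
by apply: leq_sum => sg _; rewrite sum1dep_card; exact: (card_ord_notin n.+1 (bad sg)).
Qed.

Lemma s_num_le_fact n : s_num n <= n`!.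
Proof. by rewrite /s_num -card_Sn; apply: subset_leq_card; apply/subsetP. Qed.

Lemma simpleb_of_seq n (sg : 'S_n) s :
  (forall p, p < n -> pval sg p = nth 0 s p) -> 3 <= n ->
  all (fun i => all (fun l => ~~ ((2 <= l) && (i + l <= n)) ||
        ~~ is_interval_vals n (map (nth 0 s) (iota i l))) (iota 0 n)) (iota 0 n.+1) ->
  simpleb sg.
Proof.
move=> sgE n_ge3 /allP H; rewrite /simpleb n_ge3 /=.
apply/forallP => i; apply/forallP => l; apply/implyP => hil.
have := H i; rewrite mem_iota ltn_ord => /(_ isT) /allP /(_ l).
rewrite mem_iota ltn_ord hil /= => /(_ isT).
rewrite factor_valsE (_ : map (pval sg) (iota i l) = map (nth 0 s) (iota i l)) //.
apply/eq_in_map => p; rewrite mem_iota => hp; apply: sgE.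
by move/andP: hil => [_ hil]; lia.
Qed.

Definition p2413 : 'I_4 -> 'I_4 := fun i => inord (nth 0 [:: 1; 3; 0; 2] i).

Lemma p2413_inj : injective p2413.
Proof.
move=> i j; rewrite /p2413 => /(congr1 (@nat_of_ord 4)).
case: i => [[|[|[|[|?]]]] hi] //; case: j => [[|[|[|[|?]]]] hj] //;
  by rewrite /= ?inordK //= => h; apply: val_inj.
Qed.

Lemma s_num4_gt0 : 0 < s_num 4.
Proof.
rewrite /s_num card_gt0; apply/set0Pn; exists (perm p2413_inj); rewrite inE.
apply: (@simpleb_of_seq 4 _ [:: 1; 3; 0; 2]) => //.
move=> p hp; rewrite -[p]/(val (Ordinal hp)) pvalE permE /p2413 inordK //.
by case: p hp => [|[|[|[|?]]]].
Qed.

Lemma fact_le_s_num k : 4 <= k -> (k - 4)`! <= s_num k.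
Proof.
elim: k => [|k IH] // hk; case: (ltnP k 4) => hk4.
  have -> : k = 3 by lia.
  exact: s_num4_gt0.
apply: leq_trans (s_num_rec k).
rewrite (_ : k.+1 - 4 = (k - 4).+1) ?factS; last lia.
by rewrite (_ : (k - 4).+1 = k - 3) ?leq_mul2l ?IH ?orbT //; lia.
Qed.

(** * The critical point of [Lambda k] *)

Open Scope R_scope.

Lemma leq_INR (a b : nat) : (a <= b)%nat -> INR a <= INR b.
Proof. by move=> h; apply: le_INR; lia. Qed.

Definition lsum (f : nat -> R) (l : list nat) : R :=
  List.fold_right Rplus 0 (List.map f l).

Lemma lsum_nil (f : nat -> R) : lsum f nil = 0.
Proof. by []. Qed.

Lemma lsum_cons (f : nat -> R) a l : lsum f (a :: l) = f a + lsum f l.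
Proof. by []. Qed.

Lemma lsum_le (l : list nat) (f g : nat -> R) :
  (forall j, List.In j l -> f j <= g j) -> lsum f l <= lsum g l.
Proof.
elim: l => [|a l IH] h; rewrite ?lsum_nil ?lsum_cons; first lra.
apply: Rplus_le_compat; first by apply: h; left.
by apply: IH => j hj; apply: h; right.
Qed.

Lemma lsum_const (l : list nat) b : lsum (fun _ => b) l = INR (length l) * b.
Proof.
elim: l => [|a l IH]; first by rewrite lsum_nil /=; ring.
by rewrite lsum_cons IH [length _]/= S_INR Rmult_plus_distr_r Rmult_1_l Rplus_comm.
Qed.

Lemma lsum_ge0 (l : list nat) (f : nat -> R) :
  (forall j, List.In j l -> 0 <= f j) -> 0 <= lsum f l.
Proof. by move=> h; have := lsum_le h; rewrite lsum_const Rmult_0_r. Qed.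

Lemma lsum_ge_term (l : list nat) (f : nat -> R) a :
  (forall j, List.In j l -> 0 <= f j) -> List.In a l -> f a <= lsum f l.
Proof.
elim: l => [|b l IH] h //= [<-|ha]; rewrite lsum_cons.
  by have := lsum_ge0 (fun j hj => h j (or_intror hj)); lra.
have := IH (fun j hj => h j (or_intror hj)) ha.
by have := h b (or_introl erefl); lra.
Qed.

Lemma lsum_ext (l : list nat) (f g : nat -> R) :
  (forall j, f j = g j) -> lsum f l = lsum g l.
Proof. by move=> h; elim: l => [|b l IH] //; rewrite !lsum_cons IH h. Qed.

Lemma lsum_mull (l : list nat) (f : nat -> R) a :
  lsum (fun j => a * f j) l = a * lsum f l.
Proof. by elim: l => [|b l IH]; rewrite ?lsum_nil ?lsum_cons ?IH; ring. Qed.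

Lemma derivable_pt_lim_lsum (l : list nat) (c : nat -> R) (g : R -> R) x g' :
  derivable_pt_lim g x g' ->
  derivable_pt_lim (fun y => lsum (fun j => c j * g y ^ j) l) x
    (lsum (fun j => c j * (INR j * g x ^ Nat.pred j * g')) l).
Proof.
move=> hg; elim: l => [|a l IH] /=; first exact: (derivable_pt_lim_const 0).
apply: (derivable_pt_lim_plus (fun y => c a * g y ^ a)) => //.
apply: (derivable_pt_lim_scal (fun y => g y ^ a)).
apply: (derivable_pt_lim_comp g (fun z => z ^ a)) => //.
exact: derivable_pt_lim_pow.
Qed.

Lemma derivable_pt_lim_one_minus t : derivable_pt_lim (fun y => 1 - y) t (-1).
Proof.
have := derivable_pt_lim_minus (fun _ => 1) id t 0 1
  (derivable_pt_lim_const 1 t) (derivable_pt_lim_id t).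
by rewrite Rminus_0_l.
Qed.

Lemma derivable_pt_lim_Lambda k t : t <> 1 ->
  derivable_pt_lim (Lambda k) t
    ((2 * t - t ^ 2 +
      lsum (fun j => INR j * INR (s_num j) * tilde t ^ (j - 1)) (List.seq 4 (k - 3)))
     / (1 - t) ^ 2).
Proof.
move=> t_neq1; have t1 : 1 - t <> 0 by lra.
have dtilde : derivable_pt_lim (fun y => y / (1 - y)) t
    ((1 * (1 - t) - (-1) * t) / (1 - t)²).
  apply: (derivable_pt_lim_div id (fun y => 1 - y)) => //.
    exact: derivable_pt_lim_id.
  exact: derivable_pt_lim_one_minus.
have dhead : derivable_pt_lim (fun y => y ^ 2 / (1 - y)) t
    ((INR 2 * t ^ 1 * (1 - t) - (-1) * t ^ 2) / (1 - t)²).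
  apply: (derivable_pt_lim_div (fun y => y ^ 2) (fun y => 1 - y)) => //.
    exact: derivable_pt_lim_pow.
  exact: derivable_pt_lim_one_minus.
have dtail := derivable_pt_lim_lsum (List.seq 4 (k - 3)) (fun j => INR (s_num j)) dtilde.
set S := lsum _ _.
have -> : (2 * t - t ^ 2 + S) / (1 - t) ^ 2 =
    (INR 2 * t ^ 1 * (1 - t) - (-1) * t ^ 2) / (1 - t)² +
    lsum (fun j => INR (s_num j) *
      (INR j * (t / (1 - t)) ^ Nat.pred j * ((1 * (1 - t) - (-1) * t) / (1 - t)²)))
      (List.seq 4 (k - 3)).
  rewrite (@lsum_ext _ _ (fun j => / (1 - t) ^ 2 *
             (INR j * INR (s_num j) * tilde t ^ (j - 1)))); last first.
    move=> j; rewrite /tilde (_ : (j - 1)%nat = Nat.pred j); last lia.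
    by rewrite /Rsqr; field.
  by rewrite lsum_mull -/S /Rsqr /=; field.
exact: derivable_pt_lim_plus _ _ t _ _ dhead dtail.
Qed.

Lemma Lambda_crit_sum k t : t <> 1 -> derivable_pt_lim (Lambda k) t 1 ->
  lsum (fun j => INR j * INR (s_num j) * tilde t ^ (j - 1)) (List.seq 4 (k - 3))
  = 1 - 4 * t + 2 * t ^ 2.
Proof.
move=> t_neq1 hd; have t1 : 1 - t <> 0 by lra.
have := uniqueness_limite (Lambda k) t _ _ hd (derivable_pt_lim_Lambda k t_neq1).
set S := lsum _ _ => E.
rewrite (_ : S = (2 * t - t ^ 2 + S) / (1 - t) ^ 2 * (1 - t) ^ 2 - (2 * t - t ^ 2)).
  by rewrite -E; ring.
by field.
Qed.

Lemma weighted_term_ge0 t j : 0 <= t -> 0 <= INR j * INR (s_num j) * t ^ (j - 1).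
Proof.
move=> t_ge0; apply: Rmult_le_pos; last exact: pow_le.
by apply: Rmult_le_pos; apply: pos_INR.
Qed.

Lemma last_term_le1 k t : (4 <= k)%nat -> 0 < t < 1 ->
  derivable_pt_lim (Lambda k) t 1 ->
  INR k * INR ((k - 4)`!) * tilde t ^ (k - 1) <= 1.
Proof.
move=> k_ge4 t01 hd.
have T_ge0 : 0 <= tilde t by rewrite /tilde; apply: Rle_mult_inv_pos; lra.
have k_in : List.In k (List.seq 4 (k - 3)) by apply/List.in_seq; lia.
have := lsum_ge_term (fun j _ => weighted_term_ge0 j T_ge0) k_in.
rewrite Lambda_crit_sum //; last lra.
have fact_le : INR ((k - 4)`!) <= INR (s_num k).
  by apply: leq_INR; exact: fact_le_s_num.
have : INR k * INR ((k - 4)`!) * tilde t ^ (k - 1) <=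
       INR k * INR (s_num k) * tilde t ^ (k - 1).
  apply: Rmult_le_compat_r; first exact: pow_le.
  by apply: Rmult_le_compat_l; first exact: pos_INR.
simpl; nra.
Qed.

(** * Stirling-type bounds *)

Lemma exp_pow a n : exp a ^ n = exp (INR n * a).
Proof.
elim: n => [|n IH]; first by rewrite /= Rmult_0_l exp_0.
by rewrite S_INR [exp a ^ _]/= IH -exp_plus; congr exp; ring.
Qed.

Lemma pow_div_le_exp x n : 0 <= x -> (0 < n)%nat -> (x / INR n) ^ n <= exp x.
Proof.
move=> hx hn; have n_pos : 0 < INR n by apply: lt_0_INR; lia.
have -> : exp x = exp (x / INR n) ^ n by rewrite exp_pow; congr exp; field; lra.
apply: pow_incr; split; first exact: Rle_mult_inv_pos.
by have := exp_ineq1_le (x / INR n); lra.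
Qed.

Lemma pow_succ_le_exp n : (1 <= n)%nat -> INR n.+1 ^ n <= exp 1 * INR n ^ n.
Proof.
move=> hn; have n_pos : 0 < INR n by apply: lt_0_INR; lia.
have -> : INR n.+1 = INR n * (1 + / INR n) by rewrite S_INR; field; lra.
rewrite Rpow_mult_distr Rmult_comm.
apply: Rmult_le_compat_r; first by apply: pow_le; lra.
have : (1 + / INR n) ^ n <= exp (/ INR n) ^ n.
  apply: pow_incr; split; last exact: exp_ineq1_le.
  by have := Rinv_0_lt_compat _ n_pos; lra.
by rewrite exp_pow (_ : INR n * / INR n = 1) //; field; lra.
Qed.

Lemma exp_le_pow_succ n : (1 <= n)%nat -> exp 1 * INR n ^ n.+1 <= INR n.+1 ^ n.+1.
Proof.
move=> hn; have n_pos : 0 < INR n by apply: lt_0_INR; lia.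
have n1_pos : 0 < INR n.+1 by apply: lt_0_INR; lia.
rewrite [X in _ <= X ^ _](_ : INR n.+1 = INR n * (INR n.+1 / INR n)); last by field; lra.
rewrite Rpow_mult_distr Rmult_comm.
apply: Rmult_le_compat_l; first by apply: pow_le; lra.
have he : exp (/ INR n.+1) <= INR n.+1 / INR n.
  have := exp_ineq1_le (- / INR n.+1); rewrite exp_Ropp.
  rewrite (_ : 1 + - / INR n.+1 = INR n / INR n.+1); last by rewrite S_INR; field; lra.
  move=> h; have e_pos := exp_pos (/ INR n.+1).
  apply: (Rmult_le_reg_l (INR n / INR n.+1)); first exact: Rdiv_lt_0_compat.
  rewrite (_ : INR n / INR n.+1 * (INR n.+1 / INR n) = 1); last by field; lra.
  have := Rmult_le_compat_r (exp (/ INR n.+1)) _ _ (Rlt_le _ _ e_pos) h.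
  by rewrite Rinv_l; lra.
have : exp (/ INR n.+1) ^ n.+1 <= (INR n.+1 / INR n) ^ n.+1.
  by apply: pow_incr; split => //; exact: Rlt_le (exp_pos _).
by rewrite exp_pow (_ : INR n.+1 * / INR n.+1 = 1) //; field; lra.
Qed.

Lemma fact_mul_exp_le n : (1 <= n)%nat -> INR (n`!) * exp 1 ^ n.-1 <= INR n ^ n.+1.
Proof.
elim: n => [|n IH] hn //; case: (ltnP n 1) => hn1.
  have -> : n = 0%nat by lia.
  by rewrite /=; lra.
rewrite factS mult_INR (_ : (n.+1).-1 = (n.-1).+1); last lia.
have e_pos := exp_pos 1.
apply: Rle_trans (_ : INR n.+1 * exp 1 * INR n ^ n.+1 <= _).
  rewrite [exp 1 ^ _]/= (_ : INR n.+1 * INR (n`!) * (exp 1 * exp 1 ^ n.-1)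
     = INR n.+1 * exp 1 * (INR (n`!) * exp 1 ^ n.-1)); last ring.
  apply: Rmult_le_compat_l; [apply: Rmult_le_pos; [apply: pos_INR | lra] | exact: IH].
rewrite Rmult_assoc [INR n.+1 ^ _]/=.
by apply: Rmult_le_compat_l; [apply: pos_INR | exact: exp_le_pow_succ].
Qed.

Lemma pow_le_exp_fact n : INR n ^ n <= exp 1 ^ n * INR (n`!).
Proof.
elim: n => [|n IH]; first by rewrite /=; lra.
rewrite factS mult_INR -!tech_pow_Rmult.
have e_pos := exp_pos 1; have n1_ge0 := pos_INR n.+1.
have hr : INR n.+1 ^ n <= exp 1 * INR n ^ n.
  case: (ltnP n 1) => hn; last exact: pow_succ_le_exp.
  have -> : n = 0%nat by lia.
  by have := exp_ineq1_le 1; rewrite /=; lra.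
apply: Rle_trans (_ : INR n.+1 * (exp 1 * INR n ^ n) <= _).
  exact: Rmult_le_compat_l.
have : exp 1 * INR n ^ n <= exp 1 * (exp 1 ^ n * INR (n`!)).
  by apply: Rmult_le_compat_l => //; lra.
by move=> h; have := Rmult_le_compat_l _ _ _ n1_ge0 h; lra.
Qed.

Lemma pow_add4_le_exp_fact N : (1 <= N)%nat ->
  INR (N + 4) ^ N <= exp 1 ^ (N + 4) * INR (N`!).
Proof.
move=> hN; have N_pos : 0 < INR N by apply: lt_0_INR; lia.
have q_pos : 0 < 4 / INR N by apply: Rdiv_lt_0_compat; lra.
rewrite (_ : INR (N + 4) = INR N * (1 + 4 / INR N)); last first.
  by rewrite plus_INR; simpl; field; lra.
rewrite Rpow_mult_distr pow_add.
have h4 : (1 + 4 / INR N) ^ N <= exp 1 ^ 4.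
  apply: Rle_trans (_ : exp (4 / INR N) ^ N <= _).
    by apply: pow_incr; split; [lra | exact: exp_ineq1_le].
  by rewrite !exp_pow; right; congr exp; simpl; field; lra.
have e4_ge0 : 0 <= exp 1 ^ 4 by apply: pow_le; have := exp_pos 1; lra.
apply: Rle_trans (_ : INR N ^ N * exp 1 ^ 4 <= _).
  by apply: Rmult_le_compat_l => //; apply: pow_le; lra.
rewrite (_ : exp 1 ^ N * exp 1 ^ 4 * INR N`! = exp 1 ^ N * INR N`! * exp 1 ^ 4);
  last ring.
exact: Rmult_le_compat_r (pow_le_exp_fact N).
Qed.

(** * Bounds on the terms of [A_k] *)

Lemma exp1_sq_lt_pow3 k : (1000 <= k)%nat -> exp 1 * INR k ^ 2 < 3 ^ (k - 1).
Proof.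
move=> hk; have k_ge : 1000 <= INR k by have := leq_INR hk; rewrite INR_IZR_INZ.
apply: Rle_lt_trans (_ : 3 * INR k ^ 2 < _).
  by apply: Rmult_le_compat_r; [apply: pow_le; lra | exact: exp_le_3].
apply: Rlt_le_trans (_ : (INR (k - 1) / INR 3) ^ 3 <= _).
  by rewrite minus_INR; [simpl; nra | lia].
apply: Rle_trans (_ : exp (INR (k - 1)) <= _).
  by apply: pow_div_le_exp => //; exact: pos_INR.
rewrite -(Rmult_1_r (INR (k - 1))) -exp_pow.
by apply: pow_incr; split; [exact: Rlt_le (exp_pos 1) | exact: exp_le_3].
Qed.

Lemma pow7_le_pow4 j : (5 <= j)%nat -> INR j ^ 7 <= 5 ^ 7 * 4 ^ (j - 5).
Proof.
elim: j => [|j IH] hj; first lia.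
case: (ltnP j 5) => hj5.
  have -> : j = 4%nat by lia.
  by simpl; lra.
rewrite (_ : (j.+1 - 5)%nat = (j - 5).+1); last lia.
have j_ge5 : 5 <= INR j by have := leq_INR hj5; rewrite INR_IZR_INZ.
have step : INR j.+1 ^ 7 <= 4 * INR j ^ 7.
  apply: Rle_trans (_ : (6 / 5 * INR j) ^ 7 <= _).
    by apply: pow_incr; rewrite S_INR; split; lra.
  rewrite Rpow_mult_distr; apply: Rmult_le_compat_r; first by apply: pow_le; lra.
  by simpl; lra.
by have := IH hj5; rewrite [4 ^ (j - 5).+1]/=; lra.
Qed.

(* [6328125 = 3 ^ 4 * 5 ^ 7]; what remains is [(12 j) ^ (j - 5) <= k ^ (j - 5)]. *)
Lemma small_index_bound j k : (5 <= j)%nat -> (12 * j <= k)%nat ->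
  INR j ^ (j + 2) * 3 ^ (j - 1) <= 6328125 * INR k ^ (j - 5).
Proof.
move=> hj hjk; have [d hd] : exists d, j = (d + 5)%nat by exists (j - 5)%nat; lia.
subst j.
rewrite (_ : (d + 5 + 2)%nat = (7 + d)%nat); last lia.
rewrite (_ : (d + 5 - 1)%nat = (4 + d)%nat); last lia.
rewrite (_ : (d + 5 - 5)%nat = d); last lia.
have h7 := @pow7_le_pow4 (d + 5) ltac:(lia).
rewrite (_ : (d + 5 - 5)%nat = d) in h7; last lia.
set J := INR (d + 5) in h7 *.
have J_ge0 : 0 <= J by apply: pos_INR.
have kJ : 12 * J <= INR k.
  by have := leq_INR hjk; rewrite mult_INR [INR 12]INR_IZR_INZ.
rewrite !pow_add (_ : J ^ 7 * J ^ d * (3 ^ 4 * 3 ^ d) = 81 * J ^ 7 * (3 * J) ^ d);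
  last by rewrite Rpow_mult_distr; simpl; ring.
apply: Rle_trans (_ : 81 * (5 ^ 7 * 4 ^ d) * (3 * J) ^ d <= _).
  by apply: Rmult_le_compat_r; [apply: pow_le; lra | lra].
rewrite (_ : 81 * (5 ^ 7 * 4 ^ d) * (3 * J) ^ d = 6328125 * (12 * J) ^ d); last first.
  rewrite (_ : 12 * J = 4 * (3 * J)); last ring.
  by rewrite [(4 * _) ^ d]Rpow_mult_distr; simpl; ring.
by apply: Rmult_le_compat_l; [lra | apply: pow_incr; lra].
Qed.

Lemma ratio_pow_le_exp k j y m : (1000 <= k)%nat -> 0 <= y -> y < INR m + 1 ->
  (j + m + 1 <= k)%nat -> (k < 12 * j)%nat ->
  (INR j / INR k) ^ (j - 1) <= exp (- (y / 13)).
Proof.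
move=> k_ge y_ge0 hym hjm hkj.
have k_pos : 0 < INR k by apply: lt_0_INR; lia.
have hjk : INR j + INR m + 1 <= INR k.
  by have := leq_INR hjm; rewrite !plus_INR /=; lra.
have := pos_INR m; have := pos_INR j => j_ge0 m_ge0.
have ratio_le : INR j / INR k <= exp (- (y / INR k)).
  apply: Rle_trans (exp_ineq1_le _).
  apply: (Rmult_le_reg_r (INR k)) => //.
  rewrite /Rdiv Rmult_assoc Rinv_l; last lra.
  by rewrite (_ : (1 + - (y * / INR k)) * INR k = INR k - y); [lra | field; lra].
have k13 : INR k + 1 <= 13 * INR (j - 1).
  have hk : (k + 1 <= 13 * (j - 1))%nat by lia.
  by have := leq_INR hk; rewrite mult_INR plus_INR /=; lra.
apply: Rle_trans (_ : exp (- (y / INR k)) ^ (j - 1) <= _).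
  by apply: pow_incr; split => //; apply: Rle_mult_inv_pos; lra.
rewrite exp_pow; case: (Req_dec y 0) => [->|y_neq0].
  by right; congr exp; field; lra.
left; apply: exp_increasing.
apply: (Rmult_lt_reg_r (13 * INR k / y)); first by apply: Rdiv_lt_0_compat; lra.
rewrite (_ : INR (j - 1) * - (y / INR k) * (13 * INR k / y) = - (13 * INR (j - 1)));
  last by field; lra.
by rewrite (_ : - (y / 13) * (13 * INR k / y) = - INR k); [lra | field; lra].
Qed.

(* [exp (y / 13) >= (y / 364) ^ 28], with [364 = 13 * 28]. *)
Lemma exp1_pow27_le_exp y : exp 1 * 364 ^ 28 <= y -> exp 1 * y ^ 27 <= exp (y / 13).
Proof.
move=> hy; have c_pos : 0 < 364 ^ 28 by apply: pow_lt; lra.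
have y_ge0 : 0 <= y by have := exp_pos 1; nra.
apply: Rle_trans (_ : (y / 13 / INR 28) ^ 28 <= _); last first.
  by apply: pow_div_le_exp; [lra | lia].
rewrite (_ : y / 13 / INR 28 = y * / 364); last by simpl; field.
rewrite Rpow_mult_distr pow_inv (_ : 28%nat = (27 + 1)%nat) // pow_add pow_1.
rewrite Rmult_assoc [exp 1 * _]Rmult_comm.
apply: Rmult_le_compat_l; first exact: pow_le.
apply: (Rmult_le_reg_r (364 ^ 28)) => //.
by rewrite Rmult_assoc Rinv_l; [lra | apply: Rgt_not_eq; apply: pow_lt; lra].
Qed.

Lemma large_index_decay k j y m : (1000 <= k)%nat -> y ^ 3 = INR k ->
  exp 1 * 364 ^ 28 <= y -> y < INR m + 1 -> (j + m + 1 <= k)%nat ->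
  (k < 12 * j)%nat -> exp 1 * INR k ^ 9 * (INR j / INR k) ^ (j - 1) <= 1.
Proof.
move=> k_ge hy3 hy hym hjm hkj.
have k_pos : 0 < INR k by apply: lt_0_INR; lia.
have c_pos : 0 < 364 ^ 28 by apply: pow_lt; lra.
have y_ge0 : 0 <= y by have := exp_pos 1; nra.
rewrite (_ : INR k ^ 9 = y ^ 27); last by rewrite -hy3 -pow_mult.
apply: Rle_trans (_ : exp (y / 13) * exp (- (y / 13)) <= _); last first.
  by rewrite -exp_plus Rplus_opp_r exp_0; lra.
apply: Rmult_le_compat; first by apply: Rmult_le_pos;
  [exact: Rlt_le (exp_pos 1) | exact: pow_le].
- by apply: pow_le; apply: Rle_mult_inv_pos; [exact: pos_INR | lra].
- exact: exp1_pow27_le_exp.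
- exact: ratio_pow_le_exp k_ge y_ge0 hym hjm hkj.
Qed.

Section TermBounds.

Variables (k : nat) (T : R).
Hypotheses (k_ge1000 : (1000 <= k)%nat) (T_pos : 0 < T)
  (last_term : INR k * INR ((k - 4)`!) * T ^ (k - 1) <= 1).

Let k_pos : 0 < INR k.
Proof. by apply: lt_0_INR; lia. Qed.

(* [T] is of order [e / k], so [X] is of order [1]. *)
Let X := T * INR k / exp 1.

Let X_ge0 : 0 <= X.
Proof. by apply: Rle_mult_inv_pos; [nra | exact: exp_pos]. Qed.

Lemma scaled_tilde_pow_le : X ^ (k - 1) <= exp 1 * INR k ^ 2.
Proof.
have [N kE] : exists N, k = (N + 4)%nat by exists (k - 4)%nat; lia.
have e4 : (N + 4 - 4)%nat = N by lia.
have e1 : (N + 4 - 1)%nat = (N + 3)%nat by lia.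
move: last_term; rewrite /X kE e4 e1 => hH.
have := @pow_add4_le_exp_fact N ltac:(lia).
set K := INR (N + 4); set E := exp 1 => hfact.
have E_pos : 0 < E := exp_pos 1.
have K_pos : 0 < K by rewrite /K; apply: lt_0_INR; lia.
have EN_pos : 0 < E ^ (N + 3) by apply: pow_lt.
have T_ge0 : 0 <= T ^ (N + 3) by apply: pow_le; lra.
have K3_ge0 : 0 <= K ^ 3 by apply: pow_le; lra.
rewrite (_ : E ^ (N + 4) = E ^ (N + 3) * E) in hfact; last first.
  by rewrite (_ : (N + 4)%nat = (N + 3 + 1)%nat) ?pow_add /=; [ring | lia].
rewrite /Rdiv !Rpow_mult_distr pow_inv [K ^ (N + 3)]pow_add.
apply: (Rmult_le_reg_l (E ^ (N + 3))) => //.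
rewrite (_ : E ^ (N + 3) * (T ^ (N + 3) * (K ^ N * K ^ 3) * / E ^ (N + 3))
   = T ^ (N + 3) * K ^ 3 * K ^ N); last by field; lra.
apply: Rle_trans (_ : T ^ (N + 3) * K ^ 3 * (E ^ (N + 3) * E * INR N`!) <= _).
  by apply: Rmult_le_compat_l => //; apply: Rmult_le_pos.
rewrite (_ : T ^ (N + 3) * K ^ 3 * (E ^ (N + 3) * E * INR N`!) =
    (E ^ (N + 3) * (E * K ^ 2)) * (K * INR N`! * T ^ (N + 3))); last by simpl; ring.
rewrite -[X in _ <= X]Rmult_1_r; apply: Rmult_le_compat_l => //.
by apply: Rmult_le_pos; [lra | apply: Rmult_le_pos; [lra | apply: pow_le; lra]].
Qed.

Lemma scaled_tilde_le3 : X <= 3.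
Proof.
apply: Rnot_lt_le => X_gt3; have := exp1_sq_lt_pow3 k_ge1000.
have : 3 ^ (k - 1) <= X ^ (k - 1) by apply: pow_incr; lra.
by have := scaled_tilde_pow_le; lra.
Qed.

Lemma scaled_tilde_pow_pred_le j : (j <= k)%nat -> X ^ (j - 1) <= exp 1 * INR k ^ 2.
Proof.
move=> hjk; case: (Rle_lt_dec X 1) => hX1.
  apply: Rle_trans (_ : 1 ^ (j - 1) <= _); first exact: pow_incr.
  rewrite pow1; have : 1 <= INR k ^ 2 by have := leq_INR k_ge1000; simpl; nra.
  by have := exp_ineq1_le 1; nra.
by apply: Rle_trans scaled_tilde_pow_le; apply: Rle_pow; [lra | lia].
Qed.

Lemma term_scaled_le j : (1 <= j)%nat ->
  INR j * INR (j`!) * T ^ (j - 1) * INR k ^ (j - 1) <= INR j ^ (j + 2) * X ^ (j - 1).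
Proof.
move=> hj; have j_pos : 0 < INR j by apply: lt_0_INR; lia.
rewrite (_ : INR j * INR (j`!) * T ^ (j - 1) * INR k ^ (j - 1) =
    INR j * (INR (j`!) * exp 1 ^ (j - 1)) * X ^ (j - 1)); last first.
  rewrite Rmult_assoc -Rpow_mult_distr (_ : T * INR k = exp 1 * X).
    by rewrite Rpow_mult_distr; ring.
  by rewrite /X; field; have := exp_pos 1; lra.
rewrite (_ : INR j ^ (j + 2) = INR j * INR j ^ j.+1); last first.
  by rewrite (_ : (j + 2)%nat = (j.+1).+1) //; lia.
apply: Rmult_le_compat_r; first exact: pow_le.
apply: Rmult_le_compat_l; first lra.
by rewrite (_ : (j - 1)%nat = j.-1); [exact: fact_mul_exp_le | lia].
Qed.

(* [110592 = 4 ^ 6 * 3 ^ 3] *)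
Lemma first_term_le : INR 4 * INR (4`!) * T ^ 3 <= 110592 / INR k ^ 3.
Proof.
have k3_pos : 0 < INR k ^ 3 by apply: pow_lt.
apply: (Rmult_le_reg_r (INR k ^ 3)) => //.
rewrite (_ : 110592 / INR k ^ 3 * INR k ^ 3 = 110592); last by field; lra.
apply: Rle_trans (@term_scaled_le 4 isT) _.
have X3 := scaled_tilde_le3; have : X * (X * X) <= 27 by nra.
by simpl; nra.
Qed.

Lemma later_term_le j y : y ^ 3 = INR k -> exp 1 * 364 ^ 28 <= y ->
  y < INR (iota_k k) + 1 -> (5 <= j)%nat -> (j + iota_k k + 1 <= k)%nat ->
  INR j * INR (j`!) * T ^ (j - 1) <= 6328125 / INR k ^ 4.
Proof.
move=> hy3 hy hym hj hjm.
have kp n : 0 < INR k ^ n by apply: pow_lt.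
have kE : INR k ^ (j - 1) = INR k ^ (j - 5) * INR k ^ 4.
  by rewrite -pow_add; congr pow; lia.
apply: (Rmult_le_reg_r (INR k ^ (j - 1))) => //.
rewrite {2}kE (_ : 6328125 / INR k ^ 4 * (INR k ^ (j - 5) * INR k ^ 4) =
  6328125 * INR k ^ (j - 5)); last by field; have := kp 4%nat; lra.
apply: Rle_trans (@term_scaled_le j ltac:(lia)) _.
case: (leqP (12 * j) k) => hjk.
  apply: Rle_trans (small_index_bound hj hjk).
  apply: Rmult_le_compat_l; first by apply: pow_le; apply: pos_INR.
  by apply: pow_incr; split => //; exact: scaled_tilde_le3.
have := large_index_decay k_ge1000 hy3 hy hym hjm hjk.
set r := (INR j / INR k) ^ (j - 1) => hr.
have r_ge0 : 0 <= r by apply: pow_le; apply: Rle_mult_inv_pos; [exact: pos_INR | lra].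
have jk : INR j <= INR k by apply: leq_INR; lia.
rewrite (_ : INR j ^ (j + 2) = INR j ^ 3 * r * INR k ^ (j - 1)); last first.
  rewrite /r /Rdiv Rpow_mult_distr pow_inv.
  rewrite (_ : (j + 2)%nat = (3 + (j - 1))%nat); last lia.
  by rewrite pow_add; field; exact: Rgt_not_eq (kp _).
have j3 : INR j ^ 3 <= INR k ^ 3 by apply: pow_incr; have := pos_INR j; lra.
apply: Rle_trans (_ : INR k ^ 3 * r * INR k ^ (j - 1) * (exp 1 * INR k ^ 2) <= _).
  apply: Rmult_le_compat.
  - by apply: Rmult_le_pos; [apply: Rmult_le_pos => //; apply: pow_le; apply: pos_INR|
      apply: Rlt_le].
  - exact: pow_le.
  - apply: Rmult_le_compat_r; [exact: Rlt_le | exact: Rmult_le_compat_r].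
  - by apply: scaled_tilde_pow_pred_le; lia.
rewrite kE (_ : INR k ^ 3 * r * (INR k ^ (j - 5) * INR k ^ 4) * (exp 1 * INR k ^ 2)
   = (exp 1 * INR k ^ 9 * r) * INR k ^ (j - 5)); last by simpl; ring.
have kj5 : 0 <= INR k ^ (j - 5) by apply: pow_le; lra.
apply: Rle_trans (_ : 1 * INR k ^ (j - 5) <= _); first exact: Rmult_le_compat_r.
by apply: Rmult_le_compat_r; lra.
Qed.

End TermBounds.

Lemma lsum_seq4_le (f : nat -> R) N a b : 0 <= a -> 0 <= b -> f 4%nat <= a ->
  (forall j, (5 <= j)%nat -> List.In j (List.seq 4 N) -> f j <= b) ->
  lsum f (List.seq 4 N) <= a + INR N * b.
Proof.
case: N => [|N] a_ge0 b_ge0 f4 fj; first by rewrite lsum_nil /=; lra.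
rewrite [List.seq _ _]/= lsum_cons S_INR.
have : lsum f (List.seq 5 N) <= lsum (fun _ => b) (List.seq 5 N).
  apply: lsum_le => j j_in; apply: fj; last by right.
  by move/List.in_seq: j_in; lia.
by rewrite lsum_const List.length_seq; nra.
Qed.

Lemma IZR_le_INR_Z_to_nat z : IZR z <= INR (Z.to_nat z).
Proof.
case: (Z.le_gt_cases 0 z) => hz; first by rewrite INR_IZR_INZ Z2Nat.id //; right.
by have := pos_INR (Z.to_nat z); have := IZR_lt _ _ hz; lra.
Qed.

Lemma eventually_INR_ge r : exists K, forall k, (K <= k)%nat -> r <= INR k.
Proof.
exists (Z.to_nat (up r)) => k hk; have [hr _] := archimed r.
apply: Rle_trans (_ : IZR (up r) <= _); first lra.
exact: Rle_trans (IZR_le_INR_Z_to_nat _) (leq_INR hk).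
Qed.

Lemma cbrt_cube x : 0 < x -> Rpower x (1 / 3) ^ 3 = x.
Proof.
move=> x_pos; rewrite -Rpower_pow; last by rewrite /Rpower; exact: exp_pos.
by rewrite Rpower_mult (_ : 1 / 3 * INR 3 = 1) ?Rpower_1 //; simpl; field.
Qed.

Lemma cbrt_lt_iota_k_succ k : Rpower (INR k) (1 / 3) < INR (iota_k k) + 1.
Proof.
have [_ h] := base_Int_part (Rpower (INR k) (1 / 3)).
by have := IZR_le_INR_Z_to_nat (Int_part (Rpower (INR k) (1 / 3))); rewrite /iota_k; lra.
Qed.

Lemma A_sum_le k T : (1000 <= k)%nat -> (exp 1 * 364 ^ 28) ^ 3 <= INR k ->
  0 < T -> INR k * INR ((k - 4)`!) * T ^ (k - 1) <= 1 ->
  lsum (fun j => INR j * INR (s_num j) * T ^ (j - 1)) (List.seq 4 (k - iota_k k - 4))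
  <= (110592 + 6328125) / INR k ^ 3.
Proof.
move=> k_ge1000 k_large T_pos last_term.
have k_pos : 0 < INR k by apply: lt_0_INR; lia.
have k3_pos : 0 < INR k ^ 3 by apply: pow_lt.
set y := Rpower (INR k) (1 / 3).
have y3 : y ^ 3 = INR k by exact: cbrt_cube.
have y_large : exp 1 * 364 ^ 28 <= y.
  have y_pos : 0 < y by exact: exp_pos.
  apply: Rnot_lt_le => y_lt; move: k_large; rewrite -y3.
  set Y := exp 1 * 364 ^ 28 in y_lt *; have y2 : y * y < Y * Y by nra.
  by simpl; nra.
have s_le j : INR j * INR (s_num j) * T ^ (j - 1) <= INR j * INR (j`!) * T ^ (j - 1).
  apply: Rmult_le_compat_r; first by apply: pow_le; lra.
  by apply: Rmult_le_compat_l; [exact: pos_INR | apply: leq_INR; exact: s_num_le_fact].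
have a_ge0 : 0 <= 110592 / INR k ^ 3 by apply: Rle_mult_inv_pos; lra.
have b_ge0 : 0 <= 6328125 / INR k ^ 4 by apply: Rle_mult_inv_pos; [lra | apply: pow_lt].
apply: Rle_trans (lsum_seq4_le a_ge0 b_ge0 _ _) _.
- exact: Rle_trans (s_le 4%nat) (first_term_le k_ge1000 T_pos last_term).
- move=> j j5 /List.in_seq j_in; apply: Rle_trans (s_le j) _.
  apply: (later_term_le k_ge1000 T_pos last_term y3 y_large) => //; last lia.
  exact: cbrt_lt_iota_k_succ.
have N_le : INR (k - iota_k k - 4) <= INR k by apply: leq_INR; lia.
rewrite (_ : INR (k - iota_k k - 4) * (6328125 / INR k ^ 4) =
  INR (k - iota_k k - 4) / INR k * (6328125 / INR k ^ 3)); last by field; lra.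
have : INR (k - iota_k k - 4) / INR k <= 1.
  by apply: (Rmult_le_reg_r (INR k)) => //; rewrite /Rdiv Rmult_assoc Rinv_l; lra.
have : 0 <= 6328125 / INR k ^ 3 by apply: Rle_mult_inv_pos; lra.
rewrite /Rdiv; nra.
Qed.

Theorem lemma5p3 (tau : nat -> R)
  (Htau : forall k : nat, le 4 k ->
     0 < tau k < 1 /\ derivable_pt_lim (Lambda k) (tau k) 1) :
  exists C : R, exists K : nat, forall k : nat, le K k ->
    Rabs (A_k tau k) <= C / (INR k ^ 3).
Proof.
have [K HK] := eventually_INR_ge ((exp 1 * 364 ^ 28) ^ 3).
exists (110592 + 6328125), (maxn K 1000) => k hk.
have [t01 hd] := Htau k ltac:(lia).
have T_pos : 0 < tilde (tau k) by apply: Rdiv_lt_0_compat; lra.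
rewrite Rabs_pos_eq; last by apply: lsum_ge0 => j _; apply: weighted_term_ge0; lra.
apply: A_sum_le => //; first lia.
  by apply: HK; lia.
by apply: last_term_le1 => //; lia.
Qed.
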